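(* Let $(\zeta,x,y)$ be isothermal boundary-compatible toroidal coordinates on $\widetilde Q$, and let $\bm u_\zeta$ be a vector field on $D$ tangent to $\partial D$. With $\bm r=x\,\partial_x+y\,\partial_y$ and $\bm N_\zeta$ the shift vector of $(\zeta,x,y)$, we have $\bm r\cdot(\bm u_\zeta+\bm N_\zeta)=0$ on $\partial D$, where $\cdot$ is the standard Euclidean dot product on $\mathbb{R}^2$.
   Context: $D$ is the closed unit disc. $Q\subset\mathbb{R}^3$ is a toroidal domain: a submanifold with boundary with an orientation-preserving diffeomorphism $(\zeta,x,y):Q\to S^1\times D$; $\widetilde Q$ is its universal cover with pulled-back Euclidean metric $\widetilde g$ and lifted toroidal coordinates $(\zeta,x,y):\widetilde Q\to\mathbb{R}\times D$; $I_\zeta:D\to\widetilde Q$, $I_\zeta(x,y)=(\zeta,x,y)$. Hypersurface metric $h_\zeta=I_\zeta^*\widetilde g$; shift vector $\bm N_\zeta$ is the vector field on $D$ with $\iota_{\bm N_\zeta}h_\zeta=I_\zeta^*(\iota_{\partial_\zeta}\widetilde g)$. The coordinates are boundary-compatible if at every point of $\partial\widetilde Q$ the outward unit normal $\bm n$ satisfies $d\zeta(\bm n)=0$, and isothermal if $h_\zeta=f_\zeta(dx^2+dy^2)$ for some nowhere-vanishing function $f_\zeta$. *)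

From HB Require Import structures.
From mathcomp Require Import all_boot all_order all_algebra.
From mathcomp Require Import all_classical all_reals all_analysis.
Set Implicit Arguments. Unset Strict Implicit. Unset Printing Implicit Defensive.
Import Order.TTheory GRing.Theory Num.Theory.
Import numFieldNormedType.Exports.
Local Open Scope ring_scope.

Section Toroidal.
Variable R : realType.

Definition pt (z x y : R) : 'rV[R]_3 := \row_(i < 3) nth 0 [:: z; x; y] i.

Definition inD (x y : R) : Prop := x ^+ 2 + y ^+ 2 <= 1.
Definition onbD (x y : R) : Prop := x ^+ 2 + y ^+ 2 = 1.

(* Standard basis vectors e_0 = d/dzeta, e_1 = d/dx, e_2 = d/dy of coordinate space. *)
Definition ebasis (i : 'I_3) : 'rV[R]_3 := delta_mx 0 i.

Definition dot3 (u v : 'rV[R]_3) : R := \sum_(i < 3) u 0 i * v 0 i.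
Definition dot2 (u v : 'rV[R]_2) : R := \sum_(i < 2) u 0 i * v 0 i.

Definition vec2 (a b : R) : 'rV[R]_2 := \row_(i < 2) nth 0 [:: a; b] i.

(* Psi : R x D -> R^3 is the inverse of the lifted toroidal coordinates
   (zeta,x,y), composed with the covering map Qtilde -> Q and the inclusion
   Q -> R^3.  Its partial derivatives d_i Psi are the images in R^3 of the
   coordinate vector fields d_zeta, d_x, d_y. *)
Definition dPsi (Psi : 'rV[R]_3 -> 'rV[R]_3) (i : 'I_3) (z x y : R) : 'rV[R]_3 :=
  'D_(ebasis i) Psi (pt z x y).

Definition jac (Psi : 'rV[R]_3 -> 'rV[R]_3) (z x y : R) : 'M[R]_3 :=
  \matrix_(i < 3, j < 3) dPsi Psi i z x y 0 j.

(* Psi describes toroidal coordinates on a toroidal domain Q (S^1 = R / 2 pi Z):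
   Psi is smooth (here: differentiable, on an extension to R^3), 2pi-periodic in
   zeta, injective modulo the period on R x D (so it descends to an embedding of
   S^1 x D onto Q), an immersion (invertible Jacobian), orientation preserving. *)
Definition toroidal_coords (Psi : 'rV[R]_3 -> 'rV[R]_3) : Prop :=
  [/\ (forall p, differentiable Psi p),
      (forall z x y, Psi (pt (z + 2 * pi) x y) = Psi (pt z x y)),
      (forall z1 x1 y1 z2 x2 y2, inD x1 y1 -> inD x2 y2 ->
          Psi (pt z1 x1 y1) = Psi (pt z2 x2 y2) ->
          [/\ x1 = x2, y1 = y2 & exists k : int, z2 = z1 + k%:~R * (2 * pi)]) &
      (forall z x y, inD x y -> 0 < \det (jac Psi z x y))].

(* Tangent vector of Qtilde with coordinate components n = (n_zeta, n_x, n_y),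
   realised as a vector of R^3 (the metric gtilde is the pulled back Euclidean one). *)
Definition realise (Psi : 'rV[R]_3 -> 'rV[R]_3) (z x y : R) (n : 'rV[R]_3) : 'rV[R]_3 :=
  \sum_(i < 3) n 0 i *: dPsi Psi i z x y.

(* n (in coordinate components) is the outward unit normal of dQtilde at the
   boundary point (z,x,y) (x^2+y^2 = 1): unit, gtilde-orthogonal to the tangent
   space of the boundary (spanned by d_zeta and -y d_x + x d_y), and pointing out
   of Qtilde (its (x,y)-part has positive radial component). *)
Definition outward_unit_normal (Psi : 'rV[R]_3 -> 'rV[R]_3) (z x y : R) (n : 'rV[R]_3) : Prop :=
  [/\ dot3 (realise Psi z x y n) (realise Psi z x y n) = 1,
      dot3 (realise Psi z x y n) (dPsi Psi 0 z x y) = 0,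
      dot3 (realise Psi z x y n) ((- y) *: dPsi Psi 1 z x y + x *: dPsi Psi 2%:R z x y) = 0 &
      0 < x * n 0 1 + y * n 0 2%:R].

(* Boundary compatible: d zeta (n) = 0 for the outward unit normal n at every
   boundary point of Qtilde (d zeta (n) is the zeta-component of n). *)
Definition boundary_compatible (Psi : 'rV[R]_3 -> 'rV[R]_3) : Prop :=
  forall z x y (n : 'rV[R]_3), onbD x y -> outward_unit_normal Psi z x y n -> n 0 0 = 0.

(* Hypersurface metric h_zeta = I_zeta^* gtilde, on tangent vectors of D. *)
Definition hmetric (Psi : 'rV[R]_3 -> 'rV[R]_3) (z x y : R) (v w : 'rV[R]_2) : R :=
  dot3 (v 0 0 *: dPsi Psi 1 z x y + v 0 1 *: dPsi Psi 2%:R z x y)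
       (w 0 0 *: dPsi Psi 1 z x y + w 0 1 *: dPsi Psi 2%:R z x y).

Definition isothermal (Psi : 'rV[R]_3 -> 'rV[R]_3) : Prop :=
  exists f : R -> R -> R -> R, forall z x y, inD x y ->
    f z x y != 0 /\ forall v w, hmetric Psi z x y v w = f z x y * dot2 v w.

(* N is the shift vector: iota_{N_zeta} h_zeta = I_zeta^* (iota_{d_zeta} gtilde),
   i.e. h_zeta(N_zeta, w) = gtilde(d_zeta, dI_zeta w) for all w, at every point of D. *)
Definition shift_vector (Psi : 'rV[R]_3 -> 'rV[R]_3) (N : R -> R -> R -> 'rV[R]_2) : Prop :=
  forall z x y, inD x y -> forall w : 'rV[R]_2,
    hmetric Psi z x y (N z x y) w =
    dot3 (dPsi Psi 0 z x y) (w 0 0 *: dPsi Psi 1 z x y + w 0 1 *: dPsi Psi 2%:R z x y).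

Definition tangent_to_bD (u : R -> R -> R -> 'rV[R]_2) : Prop :=
  forall z x y, onbD x y -> exists l : R, u z x y = l *: vec2 (- y) x.

End Toroidal.

(* The outward normal at a boundary point of R x D is the gtilde-dual of the
   conormal x dx + y dy, which exists because the Jacobian is invertible.
   Boundary compatibility says this normal has no d_zeta component, so it is
   dI_zeta w for a vector w of R^2; being orthogonal to the image of the
   circle's tangent (-y, x) for the conformal metric h_zeta = f_zeta (dx^2+dy^2),
   w is a positive multiple of r = (x, y).  Orthogonality of the normal to
   d_zeta then gives gtilde(d_zeta, dI_zeta r) = 0, which by definition of the
   shift vector is h_zeta(N_zeta, r) = f_zeta r.N_zeta; u_zeta is a multiple of
   (-y, x), hence also orthogonal to r. *)

From HB Require Import structures.
From mathcomp Require Import all_boot all_order all_algebra.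
From mathcomp Require Import all_classical all_reals all_analysis.
From mathcomp Require Import ring.
Import Order.TTheory GRing.Theory Num.Theory.
Set Implicit Arguments. Unset Strict Implicit. Unset Printing Implicit Defensive.
Local Open Scope ring_scope.

Section EuclideanDot.
Variable R : realType.
Implicit Types u v : 'rV[R]_3.

Lemma dot3E u v : dot3 u v = (u *m v^T) 0 0.
Proof. by rewrite mxE; apply: eq_bigr => i _; rewrite mxE. Qed.

Lemma dot3C u v : dot3 u v = dot3 v u.
Proof. by apply: eq_bigr => i _; rewrite mulrC. Qed.

Lemma dot3Zl k u v : dot3 (k *: u) v = k * dot3 u v.
Proof. by rewrite /dot3 mulr_sumr; apply: eq_bigr => i _; rewrite mxE mulrA. Qed.

Lemma dot3Zr k u v : dot3 u (k *: v) = k * dot3 u v.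
Proof. by rewrite dot3C dot3Zl dot3C. Qed.

Lemma dot3_ge0 u : 0 <= dot3 u u.
Proof. by apply: sumr_ge0 => i _; rewrite -expr2 sqr_ge0. Qed.

Lemma dot3_pt0 (x y : R) v : dot3 (pt 0 x y) v = x * v 0 1 + y * v 0 2%:R.
Proof.
rewrite /dot3 !big_ord_recl big_ord0 !mxE /= mul0r add0r addr0.
by congr (_ * v 0 _ + _ * v 0 _); apply: val_inj.
Qed.

Lemma dot2E (v w : 'rV[R]_2) : dot2 v w = v 0 0 * w 0 0 + v 0 1 * w 0 1.
Proof.
rewrite /dot2 !big_ord_recl big_ord0 addr0.
by congr (_ + v 0 _ * w 0 _); apply: val_inj.
Qed.

Lemma vec2_eta (w : 'rV[R]_2) : w = vec2 (w 0 0) (w 0 1).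
Proof.
by apply/rowP => -[[|[|//]] ?]; rewrite !mxE /=; congr (w 0 _); apply: val_inj.
Qed.

Lemma radial_of_dot2_rot_eq0 (x y : R) (w : 'rV[R]_2) :
  x ^+ 2 + y ^+ 2 = 1 -> dot2 w (vec2 (- y) x) = 0 ->
  w = dot2 w (vec2 x y) *: vec2 x y.
Proof.
rewrite !dot2E !mxE /= => hxy hw.
have hw' : w 0 1 * x = w 0 0 * y.
  by apply/eqP; rewrite -subr_eq0; apply/eqP; rewrite -hw; ring.
rewrite {1}[w]vec2_eta; apply/rowP => -[[|[|//]] ?]; rewrite !mxE /=.
- transitivity (w 0 0 * x * x + w 0 0 * y * y); last by rewrite -hw'; ring.
  by rewrite -[LHS]mulr1 -hxy; ring.
- transitivity (w 0 1 * x * x + w 0 1 * y * y); last by rewrite hw'; ring.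
  by rewrite -[LHS]mulr1 -hxy; ring.
Qed.

Lemma dot3_eq0 (u : 'rV[R]_3) : dot3 u u = 0 -> u = 0.
Proof.
move=> u0; apply/rowP => j; rewrite mxE; apply/eqP; rewrite -sqrf_eq0 expr2.
by apply/eqP/(psumr_eq0P _ u0) => // i _; rewrite -expr2 sqr_ge0.
Qed.

Definition metric_dual (J : 'M[R]_3) (w : 'rV[R]_3) : 'rV[R]_3 :=
  w *m invmx (J *m J^T).

Lemma dot3_metric_dual (J : 'M[R]_3) (w m : 'rV[R]_3) :
  J \in unitmx -> dot3 (metric_dual J w *m J) (m *m J) = dot3 w m.
Proof.
move=> uJ; have uG : J *m J^T \in unitmx by rewrite unitmx_mul unitmx_tr uJ.
by rewrite !dot3E trmx_mul mulmxA -[_ *m J *m J^T]mulmxA mulmxKV.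
Qed.

End EuclideanDot.

Section Frame.
Variables (R : realType) (D : 'I_3 -> 'rV[R]_3).

Definition frame_mx : 'M[R]_3 := \matrix_(i < 3, j < 3) D i 0 j.

Definition frame_comb (n : 'rV[R]_3) : 'rV[R]_3 := \sum_(i < 3) n 0 i *: D i.

Definition dI (w : 'rV[R]_2) : 'rV[R]_3 := w 0 0 *: D 1 + w 0 1 *: D 2%:R.

Lemma frame_combE n : frame_comb n = n *m frame_mx.
Proof. by apply/rowP => j; rewrite !mxE summxE; apply: eq_bigr => i _; rewrite !mxE. Qed.

Lemma dI_vec2 a b : dI (vec2 a b) = a *: D 1 + b *: D 2%:R.
Proof. by rewrite /dI !mxE. Qed.

Lemma dIZ k w : dI (k *: w) = k *: dI w.
Proof. by rewrite /dI !mxE scalerDr !scalerA. Qed.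

Lemma frame_comb_split n :
  frame_comb n = n 0 0 *: D 0 + dI (vec2 (n 0 1) (n 0 2%:R)).
Proof.
have l1 : lift ord0 ord0 = 1 :> 'I_3 by apply: val_inj.
have l2 : lift ord0 (lift ord0 ord0) = 2%:R :> 'I_3 by apply: val_inj.
by rewrite /frame_comb dI_vec2 !big_ord_recl big_ord0 addr0 l1 l2.
Qed.

Lemma exists_frame_unit_normal x y :
  frame_mx \in unitmx -> x ^+ 2 + y ^+ 2 = 1 ->
  exists n, [/\ dot3 (frame_comb n) (frame_comb n) = 1,
                dot3 (frame_comb n) (D 0) = 0,
                dot3 (frame_comb n) ((- y) *: D 1 + x *: D 2%:R) = 0 &
                0 < x * n 0 1 + y * n 0 2%:R].
Proof.
move=> uJ hxy; pose nu := metric_dual frame_mx (pt 0 x y).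
have hnu m : dot3 (frame_comb nu) (frame_comb m) = x * m 0 1 + y * m 0 2%:R.
  by rewrite !frame_combE dot3_metric_dual // dot3_pt0.
clearbody nu.
have hD0 : D 0 = frame_comb (pt 1 0 0).
  by rewrite frame_comb_split dI_vec2 !mxE /= scale1r !scale0r !addr0.
have hrot : (- y) *: D 1 + x *: D 2%:R = frame_comb (pt 0 (- y) x).
  by rewrite frame_comb_split dI_vec2 !mxE /= scale0r add0r.
pose lam := dot3 (frame_comb nu) (frame_comb nu).
have lam_gt0 : 0 < lam.
  rewrite lt_def dot3_ge0 andbT; apply/eqP => /dot3_eq0 nu0.
  move: (hnu (pt 0 x y)); rewrite nu0 dot3E mul0mx !mxE /= -!expr2 hxy.
  by move/eqP; rewrite eq_sym oner_eq0.
pose k := (Num.sqrt lam)^-1.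
have k_gt0 : 0 < k by rewrite invr_gt0 sqrtr_gt0.
exists (k *: nu).
have hk : frame_comb (k *: nu) = k *: frame_comb nu.
  by rewrite !frame_combE -scalemxAl.
rewrite hk !dot3Zl hD0 hrot !hnu !mxE /=; split.
- by rewrite dot3Zr mulrA -expr2 exprVn sqr_sqrtr ?ltW // mulVf ?gt_eqF.
- by rewrite !mulr0 addr0 mulr0.
- by rewrite mulrN [y * x]mulrC addNr mulr0.
- by rewrite mulrCA [y * _]mulrCA -mulrDr -hnu; apply: mulr_gt0.
Qed.

Lemma dI_radial_orthogonal x y f n :
  x ^+ 2 + y ^+ 2 = 1 -> f != 0 ->
  (forall v w, dot3 (dI v) (dI w) = f * dot2 v w) ->
  dot3 (frame_comb n) (D 0) = 0 ->
  dot3 (frame_comb n) ((- y) *: D 1 + x *: D 2%:R) = 0 ->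
  0 < x * n 0 1 + y * n 0 2%:R -> n 0 0 = 0 ->
  dot3 (D 0) (dI (vec2 x y)) = 0.
Proof.
move=> hxy f0 hconf + + hpos n00.
rewrite frame_comb_split n00 scale0r add0r -dI_vec2.
set w := vec2 (n 0 1) (n 0 2%:R) => hn0 hnt.
have wrot : dot2 w (vec2 (- y) x) = 0.
  by apply: (mulfI f0); rewrite -hconf hnt mulr0.
have wpos : 0 < dot2 w (vec2 x y) by rewrite dot2E !mxE /= mulrC [_ * y]mulrC.
move: hn0; rewrite (radial_of_dot2_rot_eq0 hxy wrot) dIZ dot3Zl dot3C => /eqP.
by rewrite mulf_eq0 gt_eqF //= => /eqP.
Qed.

End Frame.

Theorem lemma4 (R : realType) (Psi : 'rV[R]_3 -> 'rV[R]_3)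
  (N u : R -> R -> R -> 'rV[R]_2) :
  toroidal_coords Psi -> isothermal Psi -> boundary_compatible Psi ->
  shift_vector Psi N -> tangent_to_bD u ->
  forall z x y : R, onbD x y -> dot2 (vec2 x y) (u z x y + N z x y) = 0.
Proof.
move=> [_ _ _ hdet] [f hf] hbc hN hu z x y hxy.
have hD : inD x y by rewrite /inD hxy.
have [f0 hconf] := hf z x y hD.
pose D i := dPsi Psi i z x y.
have uJ : frame_mx D \in unitmx by rewrite unitmxE unitfE gt_eqF ?hdet.
have [n hn] := exists_frame_unit_normal uJ hxy.
have hr : dot3 (D 0) (dI D (vec2 x y)) = 0.
  have [_ hn0 hnt hpos] := hn.
  exact: dI_radial_orthogonal hxy f0 hconf hn0 hnt hpos (hbc z x y n hxy hn).
have hNr : dot2 (N z x y) (vec2 x y) = 0.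
  by apply: (mulfI f0); rewrite mulr0 -hconf; exact: etrans (hN z x y hD _) hr.
have [l ->] := hu z x y hxy.
move: hNr; rewrite !dot2E !mxE /= => hNr.
by transitivity (N z x y 0 0 * x + N z x y 0 1 * y); first ring.
Qed.
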